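(* Let $\mathbb S[\boldsymbol\kappa]$ be a $k\times k$ unstable-negative feedback such that one of its $(k-1)\times(k-1)$ principal submatrices is Hurwitz-stable. Then $\mathbb S[\boldsymbol\kappa]$ is $D$-Hopf.
   Context: For a reaction network with reactant coefficients $s^j_m$ and stoichiometric matrix $\mathbb S$, a $k$-Child-Selection $\boldsymbol\kappa=(\kappa,E_\kappa,J)$ is a bijection $J:\kappa\to E_\kappa$ between $k$ species and $k$ reactions with $s^{J(m)}_m>0$; its CS-matrix is $\mathbb S[\boldsymbol\kappa]_{ml}=\mathbb S_{m,J(l)}$. Hurwitz-stable: all eigenvalues have negative real part; Hurwitz-unstable: some eigenvalue has positive real part. An unstable core is a Hurwitz-unstable CS-matrix with no Hurwitz-unstable proper principal submatrix; a $k\times k$ unstable core with $\operatorname{sign}\det=(-1)^k$ is an unstable-negative feedback. Inertia: numbers of eigenvalues with negative, positive, zero real part. $A$ is $D$-Hopf if there exist an invertible principal submatrix $A[\kappa]$ and positive diagonal $D_1,D_2$ with $\operatorname{inertia}(A[\kappa]D_1)\ne\operatorname{inertia}(A[\kappa]D_2)$. *)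

From HB Require Import structures.
From mathcomp Require Import all_boot all_order all_algebra.
From mathcomp Require Import complex.
Set Implicit Arguments. Unset Strict Implicit. Unset Printing Implicit Defensive.
Import Order.TTheory GRing.Theory Num.Theory.
Local Open Scope ring_scope.

Section Defs.
Variable R : rcfType.
Local Notation C := (R[i]).

Definition cmx n (A : 'M[R]_n) : 'M[C]_n := map_mx (real_complex R) A.

Definition eigenvalue n (A : 'M[R]_n) (l : C) : bool :=
  root (char_poly (cmx A)) l.

Definition Hurwitz_stable n (A : 'M[R]_n) : Prop :=
  forall l, eigenvalue A l -> Re l < 0.

Definition Hurwitz_unstable n (A : 'M[R]_n) : Prop :=
  exists l, eigenvalue A l /\ 0 < Re l.

Definition eigs n (A : 'M[R]_n) : seq C :=
  sval (closed_field_poly_normal (char_poly (cmx A))).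

Definition inertia n (A : 'M[R]_n) : nat * nat * nat :=
  (count (fun l : C => Re l < 0) (eigs A),
   count (fun l : C => 0 < Re l) (eigs A),
   count (fun l : C => Re l == 0) (eigs A)).

Definition psubmx n (A : 'M[R]_n) (kap : {set 'I_n}) : 'M[R]_#|kap| :=
  \matrix_(i, j) A (enum_val i) (enum_val j).

Definition pos_diag n (D : 'M[R]_n) : Prop :=
  exists d : 'rV[R]_n, D = diag_mx d /\ forall i, 0 < d 0 i.

Definition unstable_core n (A : 'M[R]_n) : Prop :=
  Hurwitz_unstable A /\
  forall kap : {set 'I_n}, kap \proper [set: 'I_n] -> ~ Hurwitz_unstable (psubmx A kap).

Definition unstable_negative_feedback n (A : 'M[R]_n) : Prop :=
  unstable_core A /\ Num.sg (\det A) = (-1) ^+ n.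

Definition D_Hopf n (A : 'M[R]_n) : Prop :=
  exists kap : {set 'I_n},
    psubmx A kap \in unitmx /\
    exists D1 D2 : 'M[R]_#|kap|, pos_diag D1 /\ pos_diag D2 /\
      inertia (psubmx A kap *m D1) <> inertia (psubmx A kap *m D2).

(* Reaction network with m species, e reactions, reactant coefficients s and
   stoichiometric matrix S.  A k-child-selection is given by an injective
   enumeration kap : 'I_k -> species and the reactions J : 'I_k -> reactions
   (J i is the reaction selected for species kap i), J injective,
   with s (kap i) (J i) > 0. *)
Definition child_selection m e k (s : 'M[R]_(m, e))
    (kap : 'I_k -> 'I_m) (J : 'I_k -> 'I_e) : Prop :=
  injective kap /\ injective J /\ forall i, 0 < s (kap i) (J i).

Definition CS_matrix m e k (S : 'M[R]_(m, e))
    (kap : 'I_k -> 'I_m) (J : 'I_k -> 'I_e) : 'M[R]_k :=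
  \matrix_(i, l) S (kap i) (J l).

End Defs.

(* Let [q] be the characteristic polynomial of the Hurwitz-stable minor
   obtained by deleting row and column [j], and [r := char_poly A - 'X * q].
   Multiplying column [j] of [A] by [e > 0] gives the characteristic
   polynomial ['X * q + e * r], whose roots at [e = 0] are [0] and the roots
   of [q].  For small [e] the roots of [q] stay in the open left half-plane,
   while [0] moves to roughly [- e * r.[0] / q.[0]]: [r.[0] > 0] because
   [sign (det A) = (-1)^k], and [q.[0] > 0] because [q] is monic without
   nonnegative real roots.  So [A D] is Hurwitz-stable for
   [D = diag(1, .., e, .., 1)] while [A = A I] is Hurwitz-unstable, and the
   two positive scalings have different inertia.  Quantitatively, a root [z]
   with [Re z >= 0] must have [|z| = O(e)], since [|q.[z]|] grows like
   [(1 + |z|)^(k-1)] on the right half-plane; then the real part of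
   [z * q.[z] + e * r.[z] = 0] is dominated by [e * r.[0] > 0]. *)
From Pilot Require Import Defs.
From HB Require Import structures.
From mathcomp Require Import all_boot all_order all_algebra.
From mathcomp Require Import complex polyrcf.
From mathcomp Require Import ring lra.
Set Implicit Arguments. Unset Strict Implicit. Unset Printing Implicit Defensive.
Import Order.TTheory GRing.Theory Num.Theory.
Local Open Scope ring_scope.

Lemma small_pos_witness (R : realFieldType) (a b P : R) : 0 <= a -> 0 <= b -> 0 < P ->
  exists2 e : R, 0 < e & e * a <= 1 /\ e * b < P.
Proof.
move=> a_ge0 b_ge0 P_gt0.
have den_gt0 : 0 < 1 + a * P + b by nra.
exists (P / (1 + a * P + b)); first exact: divr_gt0.
rewrite mulrAC ler_pdivrMr // mulrAC ltr_pdivrMr // mul1r; split; first by nra.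
by rewrite ltr_pM2l //; nra.
Qed.

Section ComplexEstimates.
Variable R : rcfType.
Local Notation C := R[i].
Local Notation normc := (@Normc.normc R).
Local Notation Re := (@complex.Re R).

Lemma normc_ge0 (x : C) : 0 <= normc x.
Proof. by case: x => a b /=; rewrite sqrtr_ge0. Qed.

Lemma normc_real (x : R) : normc x%:C%C = `|x|.
Proof. by rewrite /= expr0n /= addr0 sqrtr_sqr. Qed.

Lemma Re_le_normc (x : C) : Re x <= normc x.
Proof.
have := normc_ge_Re x; rewrite normc_def lecR => h.
by apply: le_trans (ler_norm _) _; apply: le_trans h _; case: x.
Qed.

Lemma Re_ge_Nnormc (x : C) : - normc x <= Re x.
Proof. by have := Re_le_normc (- x); rewrite normcN lerNl; case: x. Qed.

Lemma complex_ReD (x y : C) : Re (x + y) = Re x + Re y.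
Proof. by case: x; case: y. Qed.

Lemma complex_ReMr (x : C) (a : R) : Re (x * a%:C%C) = Re x * a.
Proof. by case: x => b c /=; rewrite mulr0 subr0. Qed.

Lemma complex_ReMl (a : R) (x : C) : Re (a%:C%C * x) = a * Re x.
Proof. by rewrite mulrC complex_ReMr mulrC. Qed.

Lemma normcX (x : C) n : normc (x ^+ n) = normc x ^+ n.
Proof.
elim: n => [|n IHn]; first by rewrite !expr0 Normc.normc1.
by rewrite !exprS Normc.normcM IHn.
Qed.

Lemma ler_normc_sum (I : Type) (s : seq I) (F : I -> C) :
  normc (\sum_(i <- s) F i) <= \sum_(i <- s) normc (F i).
Proof.
elim/big_ind2: _ => [|a b c d h1 h2|//]; first by rewrite Normc.normc0.
by apply: le_trans (le_normcD _ _) _; apply: lerD.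
Qed.

Lemma normc_prod (I : Type) (s : seq I) (F : I -> C) :
  normc (\prod_(i <- s) F i) = \prod_(i <- s) normc (F i).
Proof.
elim/big_ind2: _ => [|a b c d h1 h2|//]; first by rewrite Normc.normc1.
by rewrite Normc.normcM h1 h2.
Qed.

Definition coef_l1 (p : {poly C}) : R := \sum_(i < size p) normc p`_i.

Lemma coef_l1_ge0 p : 0 <= coef_l1 p.
Proof. by apply: sumr_ge0 => i _; exact: normc_ge0. Qed.

Lemma normc_horner_le (p : {poly C}) z :
  normc p.[z] <= coef_l1 p * (1 + normc z) ^+ (size p).-1.
Proof.
have nz := normc_ge0 z.
rewrite horner_coef /coef_l1 big_distrl /=.
apply: le_trans (ler_normc_sum _ _) _; apply: ler_sum => i _.
rewrite Normc.normcM normcX; apply: ler_wpM2l; first exact: normc_ge0.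
apply: (@le_trans _ _ ((1 + normc z) ^+ i)).
  by apply: lerXn2r; rewrite ?nnegrE //; lra.
apply: ler_weXn2l; first lra.
by rewrite -ltnS (leq_trans (ltn_ord i)) // leqSpred.
Qed.

Lemma normc_horner_sub0_le (p : {poly C}) z : normc z <= 1 ->
  normc (p.[z] - p.[0]) <= coef_l1 p * normc z.
Proof.
move=> z_le1; have nz := normc_ge0 z.
rewrite horner_coef0 horner_coef /coef_l1.
rewrite -(big_mkord xpredT (fun i => p`_i * z ^+ i)).
rewrite -(big_mkord xpredT (fun i => normc p`_i)).
case sp: (size p) => [|n].
  by rewrite !big_geq // sub0r normcN nth_default ?sp // Normc.normc0 mul0r.
rewrite !big_nat_recl // expr0 mulr1 addrC addKr mulrDl.
apply: le_trans (ler_normc_sum _ _) _.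
apply: (@le_trans _ _ ((\sum_(0 <= i < n) normc p`_i.+1) * normc z)); last first.
  by rewrite lerDr mulr_ge0 // normc_ge0.
rewrite big_distrl; apply: ler_sum => i _.
rewrite Normc.normcM normcX; apply: ler_wpM2l; first exact: normc_ge0.
by rewrite exprS -[X in _ <= X]mulr1 ler_wpM2l // exprn_ile1.
Qed.

Lemma Re_horner_ge (p : {poly C}) z : normc z <= 1 ->
  Re p.[0] - coef_l1 p * normc z <= Re p.[z].
Proof.
move=> /(normc_horner_sub0_le p) h.
have := Re_ge_Nnormc (p.[z] - p.[0]).
rewrite complex_ReD (_ : Re (- p.[0]) = - Re p.[0]); last by case: (p.[0]).
lra.
Qed.

(* When [Re z >= 0] both [normc (z - m) >= - Re m] and
   [normc (z - m) >= normc z - normc m] hold; the margin is chosen so that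
   whichever of the two applies dominates [stab_margin m * (1 + normc z)]. *)
Definition stab_margin (m : C) : R := - Re m / (1 + normc m - Re m).

Lemma stab_margin_gt0 m : Re m < 0 -> 0 < stab_margin m.
Proof. by move=> m_lt0; have := normc_ge0 m; rewrite /stab_margin => ?; apply: divr_gt0; lra. Qed.

Lemma stab_margin_le_normc_sub (m z : C) : Re m < 0 -> 0 <= Re z ->
  stab_margin m * (1 + normc z) <= normc (z - m).
Proof.
move=> m_lt0 z_ge0.
have w1 : Re z - Re m <= normc (z - m).
  by have := Re_le_normc (z - m); rewrite complex_ReD; case: (m).
have w2 : normc z <= normc (z - m) + normc m.
  by have := le_normcD (z - m) m; rewrite subrK.
have := normc_ge0 m; have := normc_ge0 z => nz nm.
rewrite /stab_margin mulrAC ler_pdivrMr; last lra.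
have [le|lt] := lerP (normc z) (normc m - Re m); nra.
Qed.

Lemma normc_prod_XsubC_ge (mu : seq C) z :
  (forall m, m \in mu -> Re m < 0) -> 0 <= Re z ->
  (\prod_(m <- mu) stab_margin m) * (1 + normc z) ^+ size mu <=
    normc (\prod_(m <- mu) ('X - m%:P)).[z].
Proof.
move=> mu_lt0 z_ge0; rewrite horner_prod normc_prod.
rewrite -[_ ^+ size mu]iter_mulr_1 -count_predT -big_const_seq -big_split /=.
rewrite big_seq_cond [X in _ <= X]big_seq_cond.
apply: ler_prod => m /andP[/mu_lt0 m_lt0 _].
rewrite hornerXsubC stab_margin_le_normc_sub // andbT mulr_ge0 //.
  exact/ltW/stab_margin_gt0.
by have := normc_ge0 z; lra.
Qed.

Section Perturbation.
Variables (mu : seq C) (r : {poly C}) (Q0 P0 : R).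
Hypothesis mu_stable : forall m, m \in mu -> Re m < 0.
Hypothesis size_r : (size r <= (size mu).+1)%N.
Local Notation q := (\prod_(m <- mu) ('X - m%:P)).
Local Notation growth := (coef_l1 r / \prod_(m <- mu) stab_margin m).

Lemma root_normc_le e z : 0 <= e -> 0 <= Re z ->
  z * q.[z] + e%:C%C * r.[z] = 0 -> normc z <= e * growth.
Proof.
move=> e_ge0 z_ge0 hz.
have c_gt0 : 0 < \prod_(m <- mu) stab_margin m.
  by rewrite big_seq; apply: prodr_gt0 => m /mu_stable /stab_margin_gt0.
have nz := normc_ge0 z.
have T_gt0 : 0 < (1 + normc z) ^+ size mu by apply: exprn_gt0; lra.
have hq := normc_prod_XsubC_ge mu_stable z_ge0.
have hr : normc r.[z] <= coef_l1 r * (1 + normc z) ^+ size mu.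
  apply: le_trans (normc_horner_le r z) _; apply: ler_wpM2l; first exact: coef_l1_ge0.
  by apply: ler_weXn2l; [lra | move: size_r; case: (size r)].
have heq : normc z * normc q.[z] = e * normc r.[z].
  have : z * q.[z] = - (e%:C%C * r.[z]) by apply/eqP; rewrite -addr_eq0 hz.
  by move=> /(congr1 normc); rewrite normcN !Normc.normcM normc_real ger0_norm.
rewrite mulrA ler_pdivlMr // -(ler_pM2r T_gt0).
apply: (@le_trans _ _ (normc z * normc q.[z])); first by rewrite -mulrA ler_wpM2l.
by rewrite heq -mulrA ler_wpM2l.
Qed.

Hypotheses (q0 : q.[0] = Q0%:C%C) (Q0_ge0 : 0 <= Q0).
Hypotheses (r0 : r.[0] = P0%:C%C) (P0_gt0 : 0 < P0).

Theorem perturbed_roots_Re_lt0 : exists2 e : R, 0 < e &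
  forall z, root ('X * q + (e%:C%C)%:P * r) z -> Re z < 0.
Proof.
have Cq_ge0 := coef_l1_ge0 q; have Cr_ge0 := coef_l1_ge0 r.
have K_ge0 : 0 <= growth.
  apply: divr_ge0 => //; rewrite big_seq; apply: prodr_ge0 => m /mu_stable.
  by move/stab_margin_gt0/ltW.
set K := growth in K_ge0 *; set Cq := coef_l1 q in Cq_ge0 *; set Cr := coef_l1 r in Cr_ge0 *.
have X_ge0 : 0 <= Cr * K + Cq * K ^+ 2 by rewrite addr_ge0 // mulr_ge0 // exprn_ge0.
have [e e_gt0 [eK_le1 eX_lt]] := small_pos_witness K_ge0 X_ge0 P0_gt0.
exists e => // z; rewrite rootE !hornerE => /eqP hz.
rewrite ltNge; apply/negP => z_ge0.
have nz := normc_ge0 z.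
have nz_le : normc z <= e * K := root_normc_le (ltW e_gt0) z_ge0 hz.
have nz_le1 : normc z <= 1 by apply: le_trans nz_le eK_le1.
have hqz : Re z * Q0 - Cq * normc z ^+ 2 <= Re (z * q.[z]).
  have hsub : normc z * normc (q.[z] - q.[0]) <= Cq * normc z ^+ 2.
    by rewrite expr2 mulrCA ler_wpM2l // normc_horner_sub0_le.
  have := Re_ge_Nnormc (z * (q.[z] - q.[0])).
  rewrite Normc.normcM mulrBr complex_ReD (_ : Re (- _) = - Re (z * q.[0])); last by case: (_ * _).
  rewrite [in Re (z * q.[0])]q0 complex_ReMr.
  lra.
have hrz : P0 - Cr * normc z <= Re r.[z] by rewrite -[P0]/(Re P0%:C%C) -r0; exact: Re_horner_ge.
have : Re (z * q.[z] + e%:C%C * r.[z]) = 0 by rewrite hz.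
rewrite complex_ReD complex_ReMl => hRe.
have h1 : Cq * normc z ^+ 2 <= Cq * (e * K) ^+ 2 by rewrite ler_wpM2l // lerXn2r // nnegrE; nra.
have h2 : e * (Cr * normc z) <= e * (Cr * (e * K)) by rewrite ler_wpM2l ?ler_wpM2l // ltW.
have : 0 < e * (P0 - e * (Cr * K + Cq * K ^+ 2)) by rewrite mulr_gt0 // subr_gt0.
have : 0 <= Re z * Q0 by rewrite mulr_ge0.
have : e * Re r.[z] >= e * (P0 - Cr * normc z) by rewrite ler_wpM2l // ltW.
nra.
Qed.

End Perturbation.

End ComplexEstimates.

Section RealPolynomials.
Variable R : rcfType.
Local Notation Re := (@complex.Re R).
Local Notation cpoly p := (map_poly (real_complex R) p).

Lemma monic_horner0_gt0 (q : {poly R}) : q \is monic ->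
  (forall t, 0 <= t -> ~~ root q t) -> 0 < q.[0].
Proof.
move=> q_monic q_noroot; have lc1 : lead_coef q = 1 by apply/monicP.
have [b0 hb0] : exists b0, forall x, b0 <= x -> lead_coef q <= q.[x].
  by apply: poly_pinfty_gt_lc; rewrite lc1 ltr01.
set b := Num.max b0 0.
have b_ge0 : 0 <= b by rewrite le_max lexx orbT.
have qb_ge1 : 1 <= q.[b] by rewrite -lc1 hb0 // le_max lexx.
rewrite ltNge; apply/negP => q0_le0.
have [|t /andP[t_ge0 _]] := @poly_ivt _ q 0 b b_ge0; first by rewrite q0_le0 /=; lra.
by apply/negP; exact: q_noroot.
Qed.

Theorem monic_perturbation_Re_lt0 (q r : {poly R}) : q \is monic ->
  (forall z, root (cpoly q) z -> Re z < 0) -> (size r <= size q)%N -> 0 < r.[0] ->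
  exists2 e : R, 0 < e & forall z, root (cpoly ('X * q + e%:P * r)) z -> Re z < 0.
Proof.
move=> q_monic q_stable size_r r0_gt0.
have [mu hmu] := closed_field_poly_normal (cpoly q).
rewrite lead_coef_map (monicP q_monic) rmorph1 scale1r in hmu.
have mu_stable m : m \in mu -> Re m < 0.
  by move=> m_mu; apply: q_stable; rewrite hmu root_prod_XsubC.
have size_q : size q = (size mu).+1.
  by rewrite -(size_map_poly (real_complex R)) hmu size_prod_XsubC.
have q0_gt0 : 0 < q.[0].
  apply: monic_horner0_gt0 => // t t_ge0; apply/negP => qt0.
  by have := q_stable t%:C%C; rewrite fmorph_root qt0 /= => /(_ isT); lra.
have hq0 : (\prod_(m <- mu) ('X - m%:P)).[0] = q.[0]%:C%C by rewrite -hmu horner_map.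
have hr0 : (cpoly r).[0] = r.[0]%:C%C by rewrite horner_map.
have [|e e_gt0 he] := perturbed_roots_Re_lt0 mu_stable _ hq0 (ltW q0_gt0) hr0 r0_gt0.
  by rewrite size_map_poly -size_q.
exists e => // z; rewrite rmorphD !rmorphM /= map_polyX map_polyC /= hmu.
exact: he.
Qed.

End RealPolynomials.

Lemma size_sub_monic (F : nzRingType) (p q : {poly F}) n : p \is monic -> q \is monic ->
  size p = n.+1 -> size q = n.+1 -> (size (p - q)%R <= n)%N.
Proof.
move=> /monicP lp /monicP lq sp sq; apply/leq_sizeP => i; rewrite leq_eqVlt coefB.
case/orP=> [/eqP <-|?]; last by rewrite !nth_default ?subrr ?sp ?sq.
by move: lp lq; rewrite /lead_coef sp sq /= => -> ->; rewrite subrr.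
Qed.

Lemma setC1_of_card n (sub : {set 'I_n.+1}) : #|sub| = n -> exists j, sub = [set~ j].
Proof.
move=> card_sub; have /cards1P [j sub_j] : #|~: sub| == 1%N.
  by rewrite cardsCs setCK card_ord card_sub subSnn.
by exists j; rewrite -sub_j setCK.
Qed.

Section ColumnScaling.
Variable R : comNzRingType.

Definition scale_col n (A : 'M[R]_n) (j : 'I_n) (e : R) : 'M[R]_n :=
  \matrix_(x, y) (A x y * (if y == j then e else 1)).

Lemma char_poly_scale_col0 n (A : 'M[R]_n.+1) j :
  char_poly (scale_col A j 0) = 'X * char_poly (row' j (col' j A)).
Proof.
rewrite /char_poly (expand_det_col _ j) (bigD1 j) //= big1 ?addr0 => [|i neq_ij].
  rewrite !mxE eqxx mulr0 mulr1n polyC0 subr0; congr (_ * _).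
  rewrite /cofactor -signr_odd addnn odd_double expr0 mul1r; congr (\det _).
  by apply/matrixP => i l; rewrite !mxE (inj_eq lift_inj) lift_eqF mulr1.
by rewrite !mxE eqxx mulr0 (negbTE neq_ij) mulr0n polyC0 subr0 mul0r.
Qed.

Lemma char_poly_scale_col n (A : 'M[R]_n.+1) j e :
  char_poly (scale_col A j e) =
    (1 - e)%:P * char_poly (scale_col A j 0) + e%:P * char_poly A.
Proof.
rewrite /char_poly -det_tr -[\det (char_poly_mx (scale_col A j 0))]det_tr.
rewrite -[\det (char_poly_mx A)]det_tr.
apply: (@determinant_multilinear _ _ _ _ _ j).
- apply/rowP => i; rewrite !mxE !eqxx.
  move: ('X *+ _) => X; rewrite !rmorphM !rmorphB /= !rmorph1 !rmorph0 /=; ring.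
- by apply/matrixP => i l; rewrite !mxE !lift_eqF.
- by apply/matrixP => i l; rewrite !mxE lift_eqF mulr1.
Qed.

End ColumnScaling.

Lemma eigenvalue_reindex_subset (F : fieldType) n m (A : 'M[F]_n) (h : 'I_m -> 'I_n) :
  bijective h -> {subset eigenvalue (mxsub h h A) <= eigenvalue A}.
Proof.
case=> g hK gK a /eigenvalueP [v hv v_neq0]; apply/eigenvalueP.
exists (\row_x v 0 (g x)); last first.
  apply: contra v_neq0 => /eqP w0; apply/eqP/rowP => i.
  by have := congr1 (fun w : 'rV[F]_n => w 0 (h i)) w0; rewrite !mxE hK.
apply/rowP => x; rewrite !mxE (reindex h) /=; last by exists g => y _; rewrite ?hK ?gK.
have := congr1 (fun w : 'rV[F]_m => w 0 (g x)) hv; rewrite !mxE => <-.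
by apply: eq_bigr => i _; rewrite !mxE hK gK.
Qed.

Lemma eigenvalue_reindex (F : fieldType) n m (A : 'M[F]_n) (h : 'I_m -> 'I_n) :
  bijective h -> eigenvalue (mxsub h h A) =1 eigenvalue A.
Proof.
move=> h_bij a; apply/idP/idP; first exact: eigenvalue_reindex_subset.
have [g hK gK] := h_bij.
have hgA : mxsub g g (mxsub h h A) = A by apply/matrixP => i l; rewrite !mxE !gK.
by rewrite -{1}hgA; apply: eigenvalue_reindex_subset; exists h.
Qed.

Section Spectra.
Variable R : rcfType.
Local Notation C := R[i].
Local Notation cpoly p := (map_poly (real_complex R) p).

Lemma eigenvalueE n (A : 'M[R]_n) z : Defs.eigenvalue A z = root (cpoly (char_poly A)) z.
Proof. by rewrite /Defs.eigenvalue /cmx map_char_poly. Qed.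

Lemma eigenvalue0 n (A : 'M[R]_n) : Defs.eigenvalue A 0 = (\det A == 0).
Proof.
rewrite eigenvalueE -[0](rmorph0 (real_complex R)) fmorph_root rootE horner_coef0.
by rewrite char_poly_det mulf_eq0 signr_eq0.
Qed.

Lemma eigenvalue_mxsub n m (A : 'M[R]_n) (h : 'I_m -> 'I_n) :
  bijective h -> Defs.eigenvalue (mxsub h h A) =1 Defs.eigenvalue A.
Proof.
move=> h_bij z; rewrite /Defs.eigenvalue -!eigenvalue_root_char -(eigenvalue_reindex _ h_bij).
by rewrite /cmx map_mxsub.
Qed.

Lemma eigenvalue_psubmx n m (A : 'M[R]_n) (kap : {set 'I_n}) (f : 'I_m -> 'I_n) :
  injective f -> (forall i, f i \in kap) -> #|kap| = m ->
  Defs.eigenvalue (psubmx A kap) =1 Defs.eigenvalue (mxsub f f A).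
Proof.
move=> f_inj f_kap card_kap.
pose h i := enum_rank_in (f_kap i) (f i).
have hE i : enum_val (h i) = f i by rewrite enum_rankK_in.
have h_bij : bijective h.
  apply: inj_card_bij; last by rewrite !card_ord card_kap.
  by move=> i1 i2 /(congr1 enum_val); rewrite !hE => /f_inj.
have -> : mxsub f f A = mxsub h h (psubmx A kap) by apply/matrixP => i l; rewrite !mxE !hE.
by move=> z; rewrite eigenvalue_mxsub.
Qed.

Lemma eigenvalue_psubmxT n (A : 'M[R]_n) :
  Defs.eigenvalue (psubmx A [set: 'I_n]) =1 Defs.eigenvalue A.
Proof.
move=> z; rewrite (@eigenvalue_psubmx _ _ _ _ id) ?mxsub_id // => [i|].
  exact: in_setT.
by rewrite cardsT card_ord.
Qed.

Lemma eigenvalue_psubmxC1 n (A : 'M[R]_n.+1) j :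
  Defs.eigenvalue (psubmx A [set~ j]) =1 Defs.eigenvalue (row' j (col' j A)).
Proof.
move=> z; rewrite (eigenvalue_psubmx _ (@lift_inj _ j)) => [|i|]; last 2 first.
- by rewrite !inE lift_eqF.
- by rewrite cardsC1 card_ord.
suff -> : mxsub (lift j) (lift j) A = row' j (col' j A) by [].
by apply/matrixP => i l; rewrite !mxE.
Qed.

Lemma unitmx_eigenvalue0 n (A : 'M[R]_n) : (A \in unitmx) = ~~ Defs.eigenvalue A 0.
Proof. by rewrite eigenvalue0 unitmxE unitfE. Qed.

Lemma eigs_mem n (A : 'M[R]_n) z : (z \in eigs A) = Defs.eigenvalue A z.
Proof.
rewrite /eigs; case: closed_field_poly_normal => s /= hs.
by rewrite /Defs.eigenvalue [in RHS]hs (monicP (char_poly_monic _)) scale1r root_prod_XsubC.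
Qed.

Lemma inertia_Hurwitz_stable n (A : 'M[R]_n) : Hurwitz_stable A -> (inertia A).1.2 = 0%N.
Proof.
move=> A_stable; apply/eqP; rewrite /= -leqn0 leqNgt -has_count; apply/hasPn => z.
by rewrite eigs_mem => /A_stable /lt_gtF ->.
Qed.

Lemma inertia_Hurwitz_unstable n (A : 'M[R]_n) : Hurwitz_unstable A -> (0 < (inertia A).1.2)%N.
Proof. by case=> l [Al l_gt0]; rewrite /= -has_count; apply/hasP; exists l; rewrite ?eigs_mem. Qed.

Lemma Hurwitz_stableE n (A : 'M[R]_n) :
  Hurwitz_stable A <-> forall z, root (cpoly (char_poly A)) z -> complex.Re z < 0.
Proof.
by split=> stable z; have := stable z; rewrite eigenvalueE -complexRe ltcR.
Qed.

Lemma Hurwitz_unstable_dim_gt0 n (A : 'M[R]_n) : Hurwitz_unstable A -> (0 < n)%N.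
Proof.
case: n A => // A [l [+ _]].
by rewrite eigenvalueE /char_poly det_mx00 rmorph1 rootE hornerE oner_eq0.
Qed.

End Spectra.

Section Feedback.
Variable R : rcfType.

Lemma feedback_scale_col_stable n (A : 'M[R]_n.+1) j :
  Num.sg (\det A) = (-1) ^+ n.+1 -> Hurwitz_stable (row' j (col' j A)) ->
  exists2 e : R, 0 < e & Hurwitz_stable (scale_col A j e).
Proof.
move=> sg_det /Hurwitz_stableE minor_stable.
set q := char_poly (row' j (col' j A)); set r := char_poly A - 'X * q.
have size_r : (size r <= size q)%N.
  rewrite size_char_poly; apply: size_sub_monic.
  - exact: char_poly_monic.
  - by rewrite monicMl ?monicX // char_poly_monic.
  - exact: size_char_poly.
  by rewrite mulrC size_mulX ?size_char_poly // -size_poly_eq0 size_char_poly.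
have r0_gt0 : 0 < r.[0].
  rewrite hornerD hornerN hornerM hornerX mul0r subr0 horner_coef0 char_poly_det.
  by rewrite -sg_det -normrEsg normr_gt0 -sgr_eq0 sg_det signr_eq0.
have [e e_gt0 stable_e] := monic_perturbation_Re_lt0 (char_poly_monic _) minor_stable size_r r0_gt0.
exists e => //; apply/Hurwitz_stableE => z.
rewrite char_poly_scale_col char_poly_scale_col0 -/q.
suff -> : (1 - e)%:P * ('X * q) + e%:P * char_poly A = 'X * q + e%:P * r by exact: stable_e.
by rewrite /r polyCB polyC1; ring.
Qed.

Lemma unstable_negative_feedback_D_Hopf n (A : 'M[R]_n.+1) j :
  unstable_negative_feedback A -> Hurwitz_stable (psubmx A [set~ j]) -> D_Hopf A.
Proof.
move=> [[A_unstable _] sg_det] minor_stable.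
have [e e_gt0 scaled_stable] : exists2 e : R, 0 < e & Hurwitz_stable (scale_col A j e).
  by apply: feedback_scale_col_stable => // z; rewrite -eigenvalue_psubmxC1; exact: minor_stable.
pose d := \row_(i < #|[set: 'I_n.+1]|) (if enum_val i == j then e else 1).
exists [set: 'I_n.+1]; split.
  rewrite unitmx_eigenvalue0 eigenvalue_psubmxT eigenvalue0 -sgr_eq0 sg_det.
  by rewrite signr_eq0.
exists (diag_mx (const_mx 1)), (diag_mx d); split; first by exists (const_mx 1); split=> // i; rewrite mxE.
split; first by exists d; split=> // i; rewrite mxE; case: ifP.
have -> : psubmx A [set: 'I_n.+1] *m diag_mx d = psubmx (scale_col A j e) [set: 'I_n.+1].
  by rewrite mul_mx_diag; apply/matrixP => x y; rewrite !mxE.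
have unstable_pos : (0 < (inertia (psubmx A [set: 'I_n.+1])).1.2)%N.
  apply: inertia_Hurwitz_unstable.
  by case: A_unstable => l [Al l_gt0]; exists l; rewrite eigenvalue_psubmxT.
have stable_pos : (inertia (psubmx (scale_col A j e) [set: 'I_n.+1])).1.2 = 0%N.
  by apply: inertia_Hurwitz_stable => z; rewrite eigenvalue_psubmxT; exact: scaled_stable.
rewrite diag_const_mx mulmx1 => /(congr1 (fun t => t.1.2)) eq_pos.
by move: unstable_pos; rewrite eq_pos stable_pos.
Qed.

Theorem unstable_negative_feedback_minor_D_Hopf k (A : 'M[R]_k) :
  unstable_negative_feedback A ->
  (exists sub : {set 'I_k}, #|sub| = k.-1 /\ Hurwitz_stable (psubmx A sub)) ->
  D_Hopf A.
Proof.
move=> feedback [sub [card_sub minor_stable]].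
have := Hurwitz_unstable_dim_gt0 feedback.1.1.
case: k A sub feedback card_sub minor_stable => // n A sub feedback card_sub.
have [j ->] := setC1_of_card card_sub.
by move=> minor_stable _; exact: unstable_negative_feedback_D_Hopf minor_stable.
Qed.

End Feedback.

Theorem mainTheorem15 (R : rcfType) (m e k : nat)
    (s S : 'M[R]_(m, e)) (kap : 'I_k -> 'I_m) (J : 'I_k -> 'I_e) :
  child_selection s kap J ->
  unstable_negative_feedback (CS_matrix S kap J) ->
  (exists sub : {set 'I_k}, #|sub| = k.-1 /\
     Hurwitz_stable (psubmx (CS_matrix S kap J) sub)) ->
  D_Hopf (CS_matrix S kap J).
Proof. by move=> _; exact: unstable_negative_feedback_minor_D_Hopf. Qed.
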